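(* Let $\lambda\in(0,r^\alpha)$ and consider the $\lambda$-NRW on the augmented tree. Then for every $f\in\mathcal D_X$, the trace function $\mathrm{Tr}f$ is continuous on $K$.
   Context: Let $\{S_i\}_{i=1}^N$ ($N\ge2$) be contractive similitudes of $\mathbb R^d$ with ratios $r_i\in(0,1)$ satisfying the open set condition; $K$ the self-similar set, $\alpha$ its Hausdorff dimension, $r=\min r_i$. $\Sigma^*$ finite words with empty word $\vartheta$, $S_{\mathbf x}=S_{i_1}\circ\cdots\circ S_{i_k}$, $r_{\mathbf x}=r_{i_1}\cdots r_{i_k}$. $\mathcal J_0=\{\vartheta\}$, $\mathcal J_n=\{i_1\cdots i_k:r_{i_1\cdots i_k}\le r^n<r_{i_1\cdots i_{k-1}}\}$, $X=\bigcup_n\mathcal J_n$, $|\mathbf x|=n$ on $\mathcal J_n$, parent $\mathbf x^-$ the prefix in $\mathcal J_{n-1}$. Edges: $\{\mathbf x,\mathbf x^-\}$ and horizontal $\{\mathbf x,\mathbf y\}$ ($\mathbf x\ne\mathbf y\in\mathcal J_n$, $\inf_{\xi,\eta\in K}|S_{\mathbf x}(\xi)-S_{\mathbf y}(\eta)|\le\gamma r^n$). Geodesic ray: $(\mathbf x_n)$, $\mathbf x_n\in\mathcal J_n$, each a prefix of the next, converging to $\xi$ if $\xi\in S_{\mathbf x_n}(K)$ for all $n$. $\lambda$-NRW conductances: $c(\mathbf x,\mathbf x^-)=r_{\mathbf x}^\alpha\lambda^{-|\mathbf x|}$, $c(\mathbf x,\mathbf y)\asymp r_{\mathbf x}^\alpha\lambda^{-|\mathbf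 x|}$ on horizontal edges. $\mathcal E_X[f]=\frac12\sum_{\mathbf x\sim\mathbf y}c(\mathbf x,\mathbf y)(f(\mathbf x)-f(\mathbf y))^2$, $\mathcal D_X=\{f:\mathcal E_X[f]<\infty\}$. For $\lambda\in(0,r^\alpha)$ and $f\in\mathcal D_X$, $\mathrm{Tr}f(\xi)=\lim_nf(\mathbf x_n)$ for any geodesic ray $(\mathbf x_n)$ converging to $\xi$; this limit exists and does not depend on the ray. *)

From HB Require Import structures.
From mathcomp Require Import all_boot all_order all_algebra.
From mathcomp Require Import all_classical all_reals all_analysis.
Set Implicit Arguments. Unset Strict Implicit. Unset Printing Implicit Defensive.
Import Order.TTheory GRing.Theory Num.Theory.
Import numFieldNormedType.Exports.
Local Open Scope classical_set_scope.
Local Open Scope ring_scope.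

Section Fractal.
Variable R : realType.
Variable d : nat.
Notation pt := 'rV[R]_d.

Definition enorm (v : pt) : R := Num.sqrt (\sum_(j < d) (v ord0 j) ^+ 2).
Definition edist (x y : pt) : R := enorm (x - y).

Definition similitude (s : R) (S : pt -> pt) : Prop :=
  forall x y, edist (S x) (S y) = s * edist x y.

Definition OSC (N : nat) (S : 'I_N -> pt -> pt) : Prop :=
  exists U : set pt, [/\ open U, U !=set0,
    (forall i, S i @` U `<=` U) &
    (forall i j, i != j -> S i @` U `&` S j @` U = set0)].

(* K is the self-similar set (attractor) of the IFS: the nonempty compact
   set with K = \bigcup_i S_i(K) (unique by Hutchinson's theorem) *)
Definition self_similar_set (N : nat) (S : 'I_N -> pt -> pt) (K : set pt) :=
  [/\ compact K, K !=set0 & K = \bigcup_(i in setT) (S i @` K)].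

Definition ediam (A : set pt) : \bar R :=
  ereal_sup [set (edist x y)%:E | x in A & y in A].

(* diam(U)^s, with the convention diam(emptyset)^s = 0 *)
Definition diam_pow (s : R) (U : set pt) : \bar R :=
  if pselect (U = set0) then 0%E else ((fine (ediam U)) `^ s)%:E.

Definition hausdorff_content (s delta : R) (A : set pt) : \bar R :=
  ereal_inf [set (\sum_(0 <= k <oo) diam_pow s (U k))%E |
     U in [set U : nat -> set pt |
             A `<=` \bigcup_k U k /\ forall k, (ediam (U k) <= delta%:E)%E]].

Definition hausdorff_measure (s : R) (A : set pt) : \bar R :=
  ereal_sup [set hausdorff_content s delta A | delta in [set e : R | 0 < e]].

Definition hausdorff_dim (A : set pt) : R :=
  inf [set s : R | 0 <= s /\ hausdorff_measure s A = 0%E].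

Variable N : nat.
Variable rr : 'I_N -> R.
Variable S : 'I_N -> pt -> pt.

Definition word := seq 'I_N.

Definition Sw (x : word) : pt -> pt := foldr (fun i g => S i \o g) id x.
Definition rw (x : word) : R := \prod_(i <- x) rr i.
Definition rmin : R := \big[Order.min/1]_(i < N) rr i.

Definition inJ (n : nat) (x : word) : Prop :=
  if n is 0 then x = [::]
  else x <> [::] /\ rw x <= rmin ^+ n < rw (take (size x).-1 x).

(* vertices of X are pairs (n, x) with x \in J_n, |(n,x)| = n *)
Definition vertex := (nat * word)%type.
Definition isvertex (u : vertex) : Prop := inJ u.1 u.2.

Definition parent_of (v u : vertex) : Prop :=
  isvertex u /\ isvertex v /\ u.1 = v.1.+1 /\ prefix v.2 u.2.

Definition hedge (gamma : R) (K : set pt) (n : nat) (x y : word) : Prop :=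
  [/\ inJ n x, inJ n y, x <> y &
      inf [set edist (Sw x xi) (Sw y eta) | xi in K & eta in K]
        <= gamma * rmin ^+ n].

Definition adj (gamma : R) (K : set pt) (u v : vertex) : Prop :=
  parent_of v u \/ parent_of u v \/ (u.1 = v.1 /\ hedge gamma K u.1 u.2 v.2).

Definition energy (gamma : R) (K : set pt) (c : vertex -> vertex -> R)
  (f : vertex -> R) : \bar R :=
  (2^-1)%:E * \esum_(p in [set p : vertex * vertex | adj gamma K p.1 p.2])
                 ((c p.1 p.2) * (f p.1 - f p.2) ^+ 2)%:E.

Definition in_DX gamma K c f : Prop := (energy gamma K c f < +oo)%E.

Definition geodesic_ray (xs : nat -> word) : Prop :=
  forall n, inJ n (xs n) /\ prefix (xs n) (xs n.+1).

Definition ray_converges (K : set pt) (xs : nat -> word) (xi : pt) : Prop :=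
  forall n, (Sw (xs n) @` K) xi.

Definition chosen_ray (K : set pt) (xi : pt) : nat -> word :=
  xget (fun _ => [::]) [set xs | geodesic_ray xs /\ ray_converges K xs xi].

Definition Tr (K : set pt) (f : vertex -> R) (xi : pt) : R :=
  lim ((fun n => f (n, chosen_ray K xi n)) @ \oo).

End Fractal.

From Pilot Require Import Defs.
From HB Require Import structures.
From mathcomp Require Import all_boot all_order all_algebra.
From mathcomp Require Import all_classical all_reals all_analysis.
From mathcomp Require Import ring lra.
Set Implicit Arguments. Unset Strict Implicit. Unset Printing Implicit Defensive.
Import Order.TTheory GRing.Theory Num.Theory.
Import numFieldNormedType.Exports.
Local Open Scope classical_set_scope.
Local Open Scope ring_scope.

(* Finite energy bounds every edge term c u v (f u - f v)^2 by a single constant E.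
   A vertex of level n has r_x^alpha >= q^(n+1) with q = r^alpha > lambda, so its
   edges have conductance of order (q / lambda)^n and the increments of f across
   them are O(s^n), s = sqrt (lambda / q) < 1.  Hence f converges along every
   geodesic ray at a geometric rate, and two points of K at distance at most
   gamma r^n are reached by rays whose level-n vertices coincide or are joined by
   a horizontal edge, so their traces differ by O(s^n). *)

Lemma powR_exprn (R : realType) (a p : R) n :
  0 <= a -> (a ^+ n) `^ p = (a `^ p) ^+ n.
Proof. by move=> a0; rewrite -!powR_mulrn ?powR_ge0 // -!powRrM mulrC. Qed.

Lemma hausdorff_dim_ge0 (R : realType) d (A : set 'rV[R]_d) :
  0 <= hausdorff_dim A.
Proof.
rewrite /hausdorff_dim; set E := [set s : R | _].
have [->|/set0P E_neq0] := eqVneq E set0; first by rewrite inf0.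
by apply: lb_le_inf => // s [].
Qed.

Lemma edist_le_mx_norm (R : realType) d (x y : 'rV[R]_d) :
  Defs.edist x y <= Num.sqrt d%:R * `|x - y|.
Proof.
rewrite /Defs.edist /enorm -[`|x - y|]ger0_norm // -sqrtr_sqr -sqrtrM ?ler0n //.
rewrite ler_wsqrtr // mulr_natl -[X in _ *+ X]card_ord -sumr_const.
apply: ler_sum => j _.
rewrite -real_normK ?num_real // ler_sqr ?nnegrE //.
rewrite [X in _ <= X]/Num.norm /= mx_normrE.
exact: (le_bigmax _ (fun ij => `|(x - y) ij.1 ij.2|) (ord0, j)).
Qed.

Lemma prefix_mkseq (T : eqType) (a : nat -> T) m k :
  (m <= k)%N -> prefix (mkseq a m) (mkseq a k).
Proof. by move/subnKC <-; rewrite /mkseq iotaD map_cat prefix_prefix. Qed.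

Lemma geometric_increments_cvg (R : realType) (g : R ^nat) (B s : R) :
  0 <= B -> 0 <= s < 1 -> (forall n, `|g n - g n.+1| <= B * s ^+ n) ->
  exists L, g @ \oo --> L /\ forall n, `|g n - L| <= B / (1 - s) * s ^+ n.
Proof.
move=> B0 /andP[s0 s1] dg.
have s1_gt0 : 0 < 1 - s by rewrite subr_gt0.
pose t n := B / (1 - s) * s ^+ n.
have t_ge0 n : 0 <= t n by rewrite mulr_ge0 ?exprn_ge0 ?divr_ge0 // ltW.
have dt n : t n - t n.+1 = B * s ^+ n.
  by rewrite /t exprS; field; rewrite lt0r_neq0.
have t_cvg0 : t @ \oo --> 0.
  by rewrite -(mulr0 (B / (1 - s))); apply: cvgMr; apply: cvg_expr; rewrite ger0_norm.
(* [g] is squeezed between a nonincreasing and a nondecreasing sequence. *)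
pose hi n := g n + t n; pose lo n := g n - t n.
have hi_noninc : nonincreasing_seq hi.
  apply/nonincreasing_seqP => n; have := dt n; have := dg n.
  by rewrite distrC => /(le_trans (ler_norm _)); rewrite /hi; lra.
have lo_nondec : nondecreasing_seq lo.
  apply/nondecreasing_seqP => n; have := dt n; have := dg n.
  by move=> /(le_trans (ler_norm _)); rewrite /lo; lra.
have hi_cvg : hi @ \oo --> inf (range hi).
  apply: nonincreasing_cvgn hi_noninc _; exists (lo 0%N) => _ [n _ <-].
  by apply: le_trans (lo_nondec _ _ (leq0n n)) _; rewrite /lo /hi; have := t_ge0 n; lra.
set L := inf (range hi) in hi_cvg.
have g_cvg : g @ \oo --> L.
  have -> : g = hi - t by apply: funext => n; rewrite /hi !fctE addrK.
  by rewrite -(subr0 L); apply: cvgB.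
have lo_cvg : lo @ \oo --> L by rewrite -(subr0 L); apply: cvgB.
exists L; split => // n.
have Lhi : L <= hi n.
  by have := nonincreasing_cvgn_ge hi_noninc (cvgP _ hi_cvg) n; rewrite (cvg_lim _ hi_cvg).
have loL : lo n <= L.
  by have := nondecreasing_cvgn_le lo_nondec (cvgP _ lo_cvg) n; rewrite (cvg_lim _ lo_cvg).
move: Lhi loL; rewrite /hi /lo => Lhi loL.
by rewrite -/(t n) ler_norml; apply/andP; split; lra.
Qed.

Section Ratios.
Variables (R : realType) (N : nat) (rr : 'I_N -> R).
Hypothesis N_ge2 : (2 <= N)%N.
Hypothesis rr01 : forall i, 0 < rr i < 1.

Definition rmax : R := \big[Order.max/0]_(i < N) rr i.

Let i0 : 'I_N := Ordinal (ltnW N_ge2).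

Lemma rmin_gt0 : 0 < rmin rr.
Proof.
apply: (big_ind (fun x => 0 < x)) => // [x y x0 y0|i _]; first by rewrite lt_min x0.
by case/andP: (rr01 i).
Qed.

Lemma rmin_le i : rmin rr <= rr i.
Proof. by rewrite /rmin (bigD1 i) //= ge_min lexx. Qed.

Lemma rmin_lt1 : rmin rr < 1.
Proof. by apply: le_lt_trans (rmin_le i0) _; case/andP: (rr01 i0). Qed.

Lemma rmax_ge i : rr i <= rmax.
Proof. by rewrite /rmax (bigD1 i) //= le_max lexx. Qed.

Lemma rmax_ge0 : 0 <= rmax.
Proof. by apply: le_trans (rmax_ge i0); case/andP: (rr01 i0) => /ltW. Qed.

Lemma rmax_lt1 : rmax < 1.
Proof.
apply: (big_ind (fun x => x < 1)) => // [x y x1 y1|i _]; first by rewrite gt_max x1.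
by case/andP: (rr01 i).
Qed.

Lemma rw_gt0 (x : word N) : 0 < rw rr x.
Proof.
rewrite /rw big_seq_cond; apply: prodr_gt0 => i _.
by case/andP: (rr01 i).
Qed.

Lemma rw_rcons (x : word N) i : rw rr (rcons x i) = rw rr x * rr i.
Proof. by rewrite /rw -cats1 big_cat big_seq1. Qed.

Lemma inJ_rw_ge n (x : word N) : inJ rr n x -> rmin rr ^+ n.+1 <= rw rr x.
Proof.
case: n => [/= ->|n [+ /andP[_]]]; first by rewrite /rw big_nil expr1 ltW ?rmin_lt1.
case/lastP: x => [//|x i] _; rewrite size_rcons -cats1 take_size_cat // => lt_x.
rewrite cats1 rw_rcons exprS mulrC ler_pM ?exprn_ge0 ?rmin_le ?ltW ?rmin_gt0 //.
Qed.

Lemma rw_mkseq_le (a : nat -> 'I_N) k : rw rr (mkseq a k) <= rmax ^+ k.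
Proof.
elim: k => [|k IH]; first by rewrite /rw big_nil.
rewrite mkseqS rw_rcons exprSr ler_pM ?rmax_ge // ltW ?rw_gt0 //.
by case/andP: (rr01 (a k)).
Qed.

Lemma rw_mkseq_small (a : nat -> 'I_N) (e : R) :
  0 < e -> exists k, rw rr (mkseq a k) <= e.
Proof.
move=> e0; have : rmax ^+ k @[k --> \oo] --> (0 : R).
  by apply: cvg_expr; rewrite ger0_norm ?rmax_ge0 ?rmax_lt1.
move/cvgrPdist_lt => /(_ e e0) /filter_ex [k].
rewrite sub0r normrN ger0_norm ?exprn_ge0 ?rmax_ge0 // => /ltW rmax_k.
by exists k; apply: le_trans rmax_k; apply: rw_mkseq_le.
Qed.

Lemma mkseq_geodesic_ray (a : nat -> 'I_N) :
  exists lvl : nat -> nat, geodesic_ray rr (fun n => mkseq a (lvl n)).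
Proof.
have small n : exists k, rw rr (mkseq a k) <= rmin rr ^+ n.
  by apply: rw_mkseq_small; rewrite exprn_gt0 ?rmin_gt0.
pose lvl n := ex_minn (small n).
have lvlP n : rw rr (mkseq a (lvl n)) <= rmin rr ^+ n by rewrite /lvl; case: ex_minnP.
have lvl_min n k : rw rr (mkseq a k) <= rmin rr ^+ n -> (lvl n <= k)%N.
  by rewrite /lvl; case: ex_minnP => k' _; apply.
have rmin_expSn n : rmin rr ^+ n.+1 < rmin rr ^+ n.
  by rewrite exprS gtr_pMl ?exprn_gt0 ?rmin_gt0 ?rmin_lt1.
exists lvl => n; split; last first.
  by apply/prefix_mkseq/lvl_min/(le_trans (lvlP _))/ltW.
case: n => [|n] /=.
  by apply/eqP; rewrite -size_eq0 size_mkseq -leqn0 lvl_min // /rw big_nil.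
have lvl_gt0 : (0 < lvl n.+1)%N.
  rewrite lt0n; apply: contraTneq (lvlP n.+1) => ->.
  by rewrite /rw big_nil -ltNge exprn_ilt1 ?ltW ?rmin_gt0 ?rmin_lt1.
rewrite -(prednK lvl_gt0) mkseqS size_rcons -cats1 take_size_cat ?size_mkseq //.
split; first by case: (mkseq _ _).
rewrite cats1 -mkseqS prednK // lvlP /= ltNge; apply: contraTN isT => /lvl_min.
by rewrite leqNgt ltn_predL lvl_gt0.
Qed.

End Ratios.

Section Rays.
Variables (R : realType) (d N : nat) (rr : 'I_N -> R).
Variables (S : 'I_N -> 'rV[R]_d -> 'rV[R]_d) (K : set 'rV[R]_d).
Hypothesis N_ge2 : (2 <= N)%N.
Hypothesis rr01 : forall i, 0 < rr i < 1.
Hypothesis K_selfsim : self_similar_set S K.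

Lemma Sw_cat (x y : word N) : Sw S (x ++ y) =1 Sw S x \o Sw S y.
Proof. by elim: x => [|i x IH] p //=; rewrite IH. Qed.

Lemma self_similar_address xi : K xi ->
  exists a : nat -> 'I_N, forall k, (Sw S (mkseq a k) @` K) xi.
Proof.
case: K_selfsim => _ _ K_eq Kxi.
have preimage p : exists ip : 'I_N * 'rV[R]_d, K p -> K ip.2 /\ p = S ip.1 ip.2.
  have [|notKp] := pselect (K p); last by exists (Ordinal (ltnW N_ge2), p).
  by rewrite {1}K_eq => -[i _ [p' Kp' <-]]; exists (i, p').
have [F F_spec] := choice preimage.
pose pts k := iter k (fun p => (F p).2) xi.
have K_pts k : K (pts k) by elim: k => [|k IH] //=; case: (F_spec _ IH).
exists (fun k => (F (pts k)).1) => k; exists (pts k) => //.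
elim: k => [//|k IH]; rewrite mkseqS -cats1 Sw_cat /=.
by case: (F_spec _ (K_pts k)) => _ <-.
Qed.

Lemma chosen_ray_spec xi : K xi ->
  geodesic_ray rr (chosen_ray rr S K xi) /\ ray_converges S K (chosen_ray rr S K xi) xi.
Proof.
move=> /self_similar_address[a a_xi].
apply: (xgetPex _ (P := [set xs | geodesic_ray rr xs /\ ray_converges S K xs xi])).
have [lvl lvl_ray] := mkseq_geodesic_ray N_ge2 rr01 a.
by exists (fun n => mkseq a (lvl n)); split=> // n; apply: a_xi.
Qed.

Lemma close_rays_hedge (gamma : R) (xs ys : nat -> word N) x y n :
  geodesic_ray rr xs -> geodesic_ray rr ys ->
  ray_converges S K xs x -> ray_converges S K ys y ->
  Defs.edist x y <= gamma * rmin rr ^+ n -> xs n <> ys n ->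
  hedge rr S gamma K n (xs n) (ys n).
Proof.
move=> xs_ray ys_ray xs_x ys_y xy_close xy_neq.
split; [exact: (xs_ray n).1 | exact: (ys_ray n).1 | exact: xy_neq |].
apply: le_trans xy_close; apply: ge_inf.
  by exists 0 => _ [? _ [? _ <-]]; apply: sqrtr_ge0.
have [a Ka <-] := xs_x n; have [b Kb <-] := ys_y n.
by exists a => //; exists b.
Qed.

End Rays.

Section Trace.
Variables (R : realType) (d N : nat) (rr : 'I_N -> R).
Variables (S : 'I_N -> 'rV[R]_d -> 'rV[R]_d) (K : set 'rV[R]_d).
Variables (alpha gamma lambda C : R) (c : vertex N -> vertex N -> R).
Variable f : vertex N -> R.
Hypothesis N_ge2 : (2 <= N)%N.
Hypothesis rr01 : forall i, 0 < rr i < 1.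
Hypothesis K_selfsim : self_similar_set S K.
Hypothesis alpha_ge0 : 0 <= alpha.
Hypothesis gamma_gt0 : 0 < gamma.
Hypothesis lambda_gt0 : 0 < lambda.
Hypothesis lambda_lt : lambda < rmin rr `^ alpha.
Hypothesis c_sym : forall u v, c u v = c v u.
Hypothesis c_parent : forall u v, parent_of rr v u ->
  c u v = rw rr u.2 `^ alpha * lambda ^- u.1.
Hypothesis C_gt0 : 0 < C.
Hypothesis c_hedge : forall n (x y : word N), hedge rr S gamma K n x y ->
  C^-1 * (rw rr x `^ alpha * lambda ^- n) <= c (n, x) (n, y).
Hypothesis f_fin : in_DX rr S gamma K c f.

Let q := rmin rr `^ alpha.
Let s := Num.sqrt (lambda / q).

Lemma conductance_ge0 u v : adj rr S gamma K u v -> 0 <= c u v.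
Proof.
have weight_ge0 (x : word N) n : 0 <= rw rr x `^ alpha * lambda ^- n.
  by rewrite mulr_ge0 ?powR_ge0 // invr_ge0 exprn_ge0 // ltW.
case=> [vu|[uv|]]; [by rewrite c_parent | by rewrite c_sym c_parent |].
case: u v => [n x] [m y] /= [<- /c_hedge]; apply: le_trans.
by rewrite mulr_ge0 // invr_ge0 ltW.
Qed.

Let edge_sum := (\esum_(p in [set p | adj rr S gamma K p.1 p.2])
  (c p.1 p.2 * (f p.1 - f p.2) ^+ 2)%:E)%E.
Let E := fine edge_sum.

Lemma edge_sum_fin : edge_sum \is a fin_num.
Proof.
have sum_ge0 : (0 <= edge_sum)%E.
  apply: esum_ge0 => p /conductance_ge0 c_ge0.
  by rewrite lee_fin mulr_ge0 ?sqr_ge0.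
rewrite ge0_fin_numE //; move: f_fin; rewrite /in_DX /energy -/edge_sum.
case: edge_sum => [r _ | | //]; first exact: ltry.
by rewrite gt0_muley ?ltxx // lte_fin invr_gt0.
Qed.

Lemma edge_term_le u v : adj rr S gamma K u v -> c u v * (f u - f v) ^+ 2 <= E.
Proof.
move=> uv; rewrite -lee_fin /E fineK ?edge_sum_fin //.
apply: esum_ge; exists [set (u, v)]; last by rewrite fsbig_set1.
by split; [exact: finite_set1 | move=> p /= ->].
Qed.

Lemma q_gt0 : 0 < q.
Proof. by rewrite powR_gt0 // rmin_gt0. Qed.

Lemma s_ge0 : 0 <= s.
Proof. exact: sqrtr_ge0. Qed.

Lemma s_lt1 : s < 1.
Proof. by rewrite -sqrtr1 ltr_sqrt // ltr_pdivrMr ?q_gt0 // mul1r. Qed.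

Lemma level_weight_ge n (x : word N) :
  inJ rr n x -> q * (q / lambda) ^+ n <= rw rr x `^ alpha * lambda ^- n.
Proof.
move=> /(inJ_rw_ge N_ge2 rr01) rw_ge; rewrite expr_div_n mulrA -exprS.
have rmin_ge0 := ltW (rmin_gt0 rr01).
rewrite ler_wpM2r ?invr_ge0 ?exprn_ge0 ?(ltW lambda_gt0) // /q -powR_exprn //.
by apply: ge0_ler_powR rw_ge; rewrite // nnegrE ?exprn_ge0 // ltW ?rw_gt0.
Qed.

Lemma edge_diff_le u v k n : adj rr S gamma K u v -> 0 < k ->
  k * (q / lambda) ^+ n <= c u v -> `|f u - f v| <= Num.sqrt (E / k) * s ^+ n.
Proof.
move=> uv k_gt0 c_ge.
have w_gt0 : 0 < k * (q / lambda) ^+ n by rewrite mulr_gt0 ?exprn_gt0 ?divr_gt0 ?q_gt0.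
have E_ge0 : 0 <= E.
  by apply: le_trans (edge_term_le uv); rewrite mulr_ge0 ?sqr_ge0 ?conductance_ge0.
move: (ltW k_gt0) (ltW q_gt0) (ltW lambda_gt0) => k_ge0 q_ge0 lambda_ge0.
rewrite -ler_sqr ?nnegrE ?mulr_ge0 ?sqrtr_ge0 ?exprn_ge0 ?s_ge0 //.
rewrite real_normK ?num_real // exprMn sqr_sqrtr ?divr_ge0 //.
rewrite -exprM mulnC exprM sqr_sqrtr ?divr_ge0 //.
rewrite -[lambda / q]invf_div exprVn -mulrA -invfM ler_pdivlMr // mulrC.
by apply: le_trans (edge_term_le uv); rewrite ler_wpM2r ?sqr_ge0.
Qed.

Lemma parent_diff_le (xs : nat -> word N) n : geodesic_ray rr xs ->
  `|f (n, xs n) - f (n.+1, xs n.+1)| <= Num.sqrt (E / q) * s * s ^+ n.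
Proof.
move=> xs_ray; have [xs_n xs_pre] := xs_ray n; have [xs_Sn _] := xs_ray n.+1.
have par : parent_of rr (n, xs n) (n.+1, xs n.+1) by [].
rewrite distrC -mulrA -exprS; apply: edge_diff_le; [by left | exact: q_gt0 |].
by rewrite c_parent //; apply: level_weight_ge.
Qed.

Lemma hedge_diff_le n (x y : word N) : hedge rr S gamma K n x y ->
  `|f (n, x) - f (n, y)| <= Num.sqrt (E / (C^-1 * q)) * s ^+ n.
Proof.
move=> xy; have [x_n _ _ _] := xy.
apply: edge_diff_le; [by right; right | by rewrite mulr_gt0 ?invr_gt0 ?q_gt0 |].
apply: le_trans (c_hedge xy); rewrite -mulrA ler_wpM2l ?invr_ge0 ?(ltW C_gt0) //.
exact: level_weight_ge.
Qed.

Let T := Num.sqrt (E / q) * s / (1 - s).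
Let D := Num.sqrt (E / (C^-1 * q)).

Lemma chosen_ray_Tr_le xi n : K xi ->
  `|f (n, chosen_ray rr S K xi n) - Tr rr S K f xi| <= T * s ^+ n.
Proof.
move=> /(chosen_ray_spec N_ge2 rr01 K_selfsim) [ray _].
have B_ge0 : 0 <= Num.sqrt (E / q) * s by rewrite mulr_ge0 ?sqrtr_ge0 ?s_ge0.
have s01 : 0 <= s < 1 by rewrite s_ge0 s_lt1.
have [L [fL fL_le]] := geometric_increments_cvg B_ge0 s01 (fun n => parent_diff_le n ray).
by rewrite /Tr (cvg_lim _ fL).
Qed.

Lemma Tr_close x y n : K x -> K y -> Defs.edist x y <= gamma * rmin rr ^+ n ->
  `|Tr rr S K f x - Tr rr S K f y| <= (T *+ 2 + D) * s ^+ n.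
Proof.
move=> Kx Ky xy_close.
have [x_ray x_cvg] := chosen_ray_spec N_ge2 rr01 K_selfsim Kx.
have [y_ray y_cvg] := chosen_ray_spec N_ge2 rr01 K_selfsim Ky.
set xs := chosen_ray rr S K x in x_ray x_cvg *.
set ys := chosen_ray rr S K y in y_ray y_cvg *.
have level_diff : `|f (n, xs n) - f (n, ys n)| <= D * s ^+ n.
  have [->|neq] := eqVneq (xs n) (ys n).
    by rewrite subrr normr0 mulr_ge0 ?sqrtr_ge0 ?exprn_ge0 ?s_ge0.
  by apply/hedge_diff_le/(close_rays_hedge x_ray) => //; apply/eqP.
have := chosen_ray_Tr_le n Kx; have := chosen_ray_Tr_le n Ky.
rewrite -/xs -/ys mulrDl mulrnAl; move: level_diff.
rewrite !ler_norml => /andP[? ?] /andP[? ?] /andP[? ?].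
by apply/andP; split; lra.
Qed.

Lemma Tr_continuous : {within K, continuous (Tr rr S K f)}.
Proof.
apply/subspace_continuousP => x Kx; apply/cvgrPdist_lt => e e_gt0.
have [n small_n] : exists n, (T *+ 2 + D) * s ^+ n < e.
  have : (T *+ 2 + D) * s ^+ n @[n --> \oo] --> 0.
    rewrite -(mulr0 (T *+ 2 + D)); apply: cvgMr; apply: cvg_expr.
    by rewrite ger0_norm ?s_ge0 ?s_lt1.
  move/cvgrPdist_lt => /(_ e e_gt0) /filter_ex [n].
  by rewrite sub0r normrN => /(le_lt_trans (ler_norm _)); exists n.
have sqrt_d1_gt0 : 0 < Num.sqrt (d%:R : R) + 1 by rewrite ltr_wpDl ?sqrtr_ge0.
pose t := gamma * rmin rr ^+ n / (Num.sqrt d%:R + 1).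
have t_gt0 : 0 < t by rewrite divr_gt0 ?mulr_gt0 ?exprn_gt0 ?rmin_gt0.
have x_close : \forall y \near within K (nbhs x), `|x - y| < t.
  by apply: (@cvgr_dist_lt _ _ _ _ _ id) => //; apply: cvg_within.
near=> y.
have Ky : K y by near: y; apply: withinT.
have xy_close : Defs.edist x y <= gamma * rmin rr ^+ n.
  have xy_t : `|x - y| < t by near: y.
  have -> : gamma * rmin rr ^+ n = (Num.sqrt d%:R + 1) * t.
    by rewrite /t [RHS]mulrC divfK ?lt0r_neq0.
  apply: le_trans (edist_le_mx_norm x y) _.
  by rewrite ler_pM ?sqrtr_ge0 ?normr_ge0 ?lerDl // ltW.
by apply: le_lt_trans small_n; apply: Tr_close.
Unshelve. all: by end_near.
Qed.

End Trace.

Theorem lemma3p4 (R : realType) (d N : nat) (rr : 'I_N -> R)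
    (S : 'I_N -> 'rV[R]_d -> 'rV[R]_d) (K : set 'rV[R]_d)
    (alpha gamma lambda : R) (c : vertex N -> vertex N -> R) :
  (2 <= N)%N ->
  (forall i, 0 < rr i < 1) ->
  (forall i, similitude (rr i) (S i)) ->
  OSC S ->
  self_similar_set S K ->
  alpha = hausdorff_dim K ->
  0 < gamma ->
  0 < lambda < rmin rr `^ alpha ->
  (* conductances of the lambda-NRW *)
  (forall u v, c u v = c v u) ->
  (forall u v, parent_of rr v u -> c u v = rw rr u.2 `^ alpha * lambda ^- u.1) ->
  (exists C : R, 0 < C /\
     forall (n : nat) (x y : word N), hedge rr S gamma K n x y ->
       C^-1 * (rw rr x `^ alpha * lambda ^- n) <= c (n, x) (n, y)
       <= C * (rw rr x `^ alpha * lambda ^- n)) ->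
  forall f : vertex N -> R, in_DX rr S gamma K c f ->
  {within K, continuous (Tr rr S K f)}.
Proof.
move=> N_ge2 rr01 _ _ K_selfsim alpha_dim gamma_gt0 /andP[lambda_gt0 lambda_lt].
move=> c_sym c_parent [C [C_gt0 c_hedge]] f f_fin.
have alpha_ge0 : 0 <= alpha by rewrite alpha_dim hausdorff_dim_ge0.
apply: (Tr_continuous N_ge2 rr01 K_selfsim alpha_ge0 gamma_gt0 lambda_gt0 lambda_lt
  c_sym c_parent C_gt0 _ f_fin).
by move=> n x y /c_hedge /andP[].
Qed.
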